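(* For every $n\ge 3$, the sensitivity to synchronism of elementary cellular automaton rule $162$ satisfies $\mu(f_{162,n})=\dfrac{3^n-2^{n+1}-n+2}{3^n-2^{n+1}+2}$.
   Context: Cells are indexed by $\mathbb{Z}_n=\{0,\dots,n-1\}$, indices modulo $n$. Rule $162$ has local rule $r_{162}(x_1,x_2,x_3)=(x_1\vee\neg x_2)\wedge x_3$ and global function $f_{162,n}(x)_i=r_{162}(x_{i-1},x_i,x_{i+1})$. An update schedule is an ordered partition $\Delta=(\Delta_1,\dots,\Delta_k)$ of $\mathbb{Z}_n$ into nonempty blocks; $\mathcal{P}_n$ is the set of them. For a block $B$ let $f^{(B)}(x)_i=f_{162,n}(x)_i$ if $i\in B$ and $x_i$ otherwise; $f^{(\Delta)}_{162,n}=f^{(\Delta_k)}\circ\cdots\circ f^{(\Delta_1)}$. The dynamics of $\Delta$ is the transition digraph with arcs $(x,f^{(\Delta)}_{162,n}(x))$; $\mathcal{D}(f_{162,n})$ is the set of distinct dynamics over $\Delta\in\mathcal{P}_n$. The sensitivity to synchronism is $\mu(f_{162,n})=|\mathcal{D}(f_{162,n})|/(3^n-2^{n+1}+2)$. *)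

From mathcomp Require Import all_boot all_order all_algebra.
From mathcomp Require Import boolp.
Set Implicit Arguments. Unset Strict Implicit. Unset Printing Implicit Defensive.

Definition config (n : nat) := {ffun 'I_n -> bool}.

Definition r162 (x1 x2 x3 : bool) : bool := (x1 || ~~ x2) && x3.

Definition f162 (n : nat) (x : config n) : config n :=
  [ffun i : 'I_n => r162 (x (ord_pred i)) (x i) (x (ordS i))].

(* update schedules: ordered partitions of Z_n into nonempty blocks,
   represented as a duplicate-free sequence of blocks forming a partition *)
Definition update_schedule (n : nat) (D : seq {set 'I_n}) : bool :=
  uniq D && partition [set:: D] [set: 'I_n].

Definition block_update (n : nat) (B : {set 'I_n}) (x : config n) : config n :=
  [ffun i => if i \in B then f162 x i else x i].

Definition sched_update (n : nat) (D : seq {set 'I_n}) (x : config n) : config n :=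
  foldl (fun y B => block_update B y) x D.

Definition dynamics (n : nat) (D : seq {set 'I_n}) : {set config n * config n} :=
  [set (x, sched_update D x) | x : config n].

Definition dynamics_set (n : nat) : {set {set config n * config n}} :=
  [set G | `[< exists D : seq {set 'I_n}, update_schedule D /\ dynamics D = G >]].

Definition mu162 (n : nat) : rat :=
  (#|dynamics_set n|)%:R / ((3 ^ n)%:R - (2 ^ n.+1)%:R + 2)%R.

From mathcomp Require Import all_boot all_order all_algebra.
From mathcomp Require Import boolp zify lra.
Set Implicit Arguments. Unset Strict Implicit. Unset Printing Implicit Defensive.
Import GRing.Theory.

(* A schedule acts on the dynamics only through the relative update order of
   adjacent cells: label cell [k] by <, = or > according as [k] is updated
   before, together with, or after [k + 1].  The updated configuration is the
   unique solution of a fixed-point equation in which a cell reads the new value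
   of a neighbour exactly when that neighbour is updated strictly earlier, so it
   depends only on the labelling.  The labellings that arise are those that are
   not cyclically monotone (all labels in {<, =} with some <, or all in {>, =}
   with some >), and there are 3^n - 2^(n+1) + 2 of them.
   For rule 162 and n >= 3 the update maps of two such labellings differ
   unless they are the pair (<, =, >, ..., >) and (<, <, >, ..., >) starting
   at the same cell: a > at cell k is seen on the configuration whose only 1 is
   at k + 1, and < versus = at a cell i on the configuration whose only 0 is at
   i.  This removes exactly n dynamics. *)

Section CyclicShift.

Variable n : nat.
Implicit Types (i j k : 'I_n) (s t : nat).

Lemma ord_gt0 k : 0 < n.
Proof. exact: leq_ltn_trans (ltn_ord k). Qed.

Definition ord_shift k t : 'I_n := Ordinal (ltn_pmod (k + t) (ord_gt0 k)).

Definition ord_offset k j : nat := (j + n - k) %% n.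

Lemma ord_shift0 k : ord_shift k 0 = k.
Proof. by apply: val_inj; rewrite /= addn0 modn_small. Qed.

Lemma ord_shiftn k : ord_shift k n = k.
Proof. by apply: val_inj; rewrite /= modnDr modn_small. Qed.

Lemma ordS_shift k t : ordS (ord_shift k t) = ord_shift k t.+1.
Proof. by apply: val_inj; rewrite /= -addn1 modnDml -addnA addn1. Qed.

Lemma ord_pred_shift k t : ord_pred (ord_shift k t.+1) = ord_shift k t.
Proof. by rewrite -ordS_shift ordSK. Qed.

Lemma ord_shiftD k t s : ord_shift (ord_shift k t) s = ord_shift k (t + s).
Proof. by apply: val_inj; rewrite /= modnDml addnA. Qed.

Lemma ordS_shift1 k : ordS k = ord_shift k 1.
Proof. by rewrite -{1}(ord_shift0 k) ordS_shift. Qed.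

Lemma ord_pred_shiftn k : ord_pred k = ord_shift k n.-1.
Proof. by rewrite -ord_pred_shift prednK ?(ord_gt0 k) // ord_shiftn. Qed.

Lemma eq_ord_shift k t s : t < n -> s < n -> (ord_shift k t == ord_shift k s) = (t == s).
Proof. by move=> tn sn; rewrite -val_eqE /= eqn_modDl !modn_small. Qed.

Lemma ord_shift_neq k t : 0 < t < n -> ord_shift k t != k.
Proof.
case/andP=> t_gt0 tn; rewrite -{2}(ord_shift0 k) eq_ord_shift ?(ord_gt0 k) //.
by rewrite -lt0n.
Qed.

Lemma ordS_eqF k : 1 < n -> (ordS k == k) = false.
Proof. by move=> n_gt1; apply/negbTE; rewrite ordS_shift1 ord_shift_neq // n_gt1. Qed.

Lemma ord_offset_lt k j : ord_offset k j < n.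
Proof. exact: ltn_pmod (ord_gt0 k). Qed.

Lemma ord_offsetK k j : ord_shift k (ord_offset k j) = j.
Proof.
apply: val_inj; rewrite /= modnDmr addnBA ?addKn ?modnDr ?modn_small //.
exact: leq_trans (ltnW (ltn_ord k)) (leq_addl _ _).
Qed.

Lemma ord_shiftK k t : t < n -> ord_offset k (ord_shift k t) = t.
Proof.
move=> tn; apply/eqP; rewrite -(eq_ord_shift k) ?ord_offset_lt //.
by rewrite ord_offsetK.
Qed.

Lemma ord_shiftP k j : exists2 t, t < n & j = ord_shift k t.
Proof. by exists (ord_offset k j); rewrite ?ord_offset_lt ?ord_offsetK. Qed.

Lemma ord_around_cases i k : 1 < n ->
  [\/ k = i, k = ord_pred i | exists2 t, 0 < t <= n - 2 & k = ord_shift i t].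
Proof.
move=> n_gt1; have [[|t] tn ->] := ord_shiftP i k; first by apply: Or31; rewrite ord_shift0.
have [t_max|t_lt] := eqVneq t.+1 n.-1; first by apply: Or32; rewrite ord_pred_shiftn t_max.
by apply: Or33; exists t.+1 => //; move/eqP: t_lt; lia.
Qed.

Lemma cycle_rel_sym (T : Type) (R : rel T) (f : 'I_n -> T) :
  reflexive R -> transitive R ->
  (forall k, R (f k) (f (ordS k))) -> forall k, R (f (ordS k)) (f k).
Proof.
move=> Rrefl Rtrans Rstep k.
have Rshift j t : R (f j) (f (ord_shift j t)).
  elim: t => [|t IHt]; first by rewrite ord_shift0.
  by apply: Rtrans IHt _; rewrite -ordS_shift.
have := Rshift (ordS k) n.-1.
by rewrite ordS_shift1 ord_shiftD add1n prednK ?ord_shiftn // (ord_gt0 k).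
Qed.

End CyclicShift.

(** * Labellings and the update equation *)

(* The label of cell k compares the update time of k with that of k + 1:
   [lab_lt] earlier, [lab_eq] in the same block, [lab_gt] later. *)
Definition lab_lt : 'I_3 := @Ordinal 3 0 isT.
Definition lab_eq : 'I_3 := @Ordinal 3 1 isT.
Definition lab_gt : 'I_3 := @Ordinal 3 2 isT.

Notation labelling n := {ffun 'I_n -> 'I_3}.

Lemma labelP (c : 'I_3) : [\/ c = lab_lt, c = lab_eq | c = lab_gt].
Proof.
by case: c => -[|[|[|m]]] // c_lt; [apply: Or31 | apply: Or32 | apply: Or33];
  apply: val_inj.
Qed.

Lemma label_neq_gt (c : 'I_3) : c != lab_gt -> c = lab_lt \/ c = lab_eq.
Proof. by case: (labelP c) => ->; auto. Qed.

Definition update_eqn n (L : labelling n) (x y : config n) : bool :=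
  [forall k, y k == r162
     (if L (ord_pred k) == lab_lt then y (ord_pred k) else x (ord_pred k))
     (x k)
     (if L k == lab_gt then y (ordS k) else x (ordS k))].

Lemma update_eqnP n (L : labelling n) x y : update_eqn L x y -> forall k,
  y k = r162 (if L (ord_pred k) == lab_lt then y (ord_pred k) else x (ord_pred k))
             (x k) (if L k == lab_gt then y (ordS k) else x (ordS k)).
Proof. by move=> /forallP y_eq k; apply/eqP. Qed.

Definition compare_lab (m1 m2 : nat) : 'I_3 :=
  if m1 < m2 then lab_lt else if m1 == m2 then lab_eq else lab_gt.

Definition label_of n (rho : 'I_n -> nat) : labelling n :=
  [ffun k => compare_lab (rho k) (rho (ordS k))].

Lemma label_of_lt n (rho : 'I_n -> nat) k :
  (label_of rho k == lab_lt) = (rho k < rho (ordS k)).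
Proof. by rewrite ffunE /compare_lab; case: ltngtP. Qed.

Lemma label_of_gt n (rho : 'I_n -> nat) k :
  (label_of rho k == lab_gt) = (rho (ordS k) < rho k).
Proof. by rewrite ffunE /compare_lab; case: ltngtP. Qed.

(* Well-founded induction on the rank: each cell only reads new values of
   cells of smaller rank. *)
Lemma update_eqn_label_of_uniq n (rho : 'I_n -> nat) x y y' :
  update_eqn (label_of rho) x y -> update_eqn (label_of rho) x y' -> y = y'.
Proof.
move=> /update_eqnP y_eq /update_eqnP y'_eq.
suff eq_below m k : rho k < m -> y k = y' k.
  by apply/ffunP => k; apply: (eq_below (rho k).+1).
elim: m k => // m IHm k rho_k.
have IH j : rho j < rho k -> y j = y' j by move=> ?; apply: IHm; lia.
rewrite y_eq y'_eq label_of_lt label_of_gt ord_predK.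
by case: ifP => [/IH->|_]; case: ifP => [/IH->|_].
Qed.

Section ScheduleOfRank.

Variables (n : nat) (D : seq {set 'I_n}) (rho : 'I_n -> nat).
Hypothesis rho_lt : forall k, rho k < size D.
Hypothesis mem_nth_block : forall k t, t < size D -> (k \in nth set0 D t) = (rho k == t).

Lemma sched_update_takeS x t : t < size D ->
  sched_update (take t.+1 D) x = block_update (nth set0 D t) (sched_update (take t D) x).
Proof. by move=> tD; rewrite /sched_update (take_nth set0 tD) foldl_rcons. Qed.

Lemma sched_update_take_rank x t k : t <= size D ->
  sched_update (take t D) x k =
  if rho k < t then sched_update (take (rho k).+1 D) x k else x k.
Proof.
elim: t => [|t IHt] tD; first by rewrite take0.
rewrite sched_update_takeS // ffunE mem_nth_block //.
have [<-|rho_neq] := eqVneq (rho k) t.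
  by rewrite ltnSn sched_update_takeS // !ffunE mem_nth_block // eqxx.
by rewrite (IHt (ltnW tD)) ltnS [rho k <= t]leq_eqVlt (negbTE rho_neq).
Qed.

Lemma sched_update_rank x k :
  sched_update D x k = sched_update (take (rho k).+1 D) x k.
Proof. by rewrite -{1}(take_size D) sched_update_take_rank // rho_lt. Qed.

Lemma sched_update_prefix x t k : t <= size D ->
  sched_update (take t D) x k = if rho k < t then sched_update D x k else x k.
Proof. by move=> tD; rewrite sched_update_take_rank // -sched_update_rank. Qed.

Lemma update_eqn_sched x : update_eqn (label_of rho) x (sched_update D x).
Proof.
apply/forallP => k; apply/eqP.
rewrite label_of_lt label_of_gt ord_predK sched_update_rank sched_update_takeS //.
rewrite ffunE mem_nth_block // eqxx ffunE !sched_update_prefix ?(ltnW (rho_lt k)) //.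
by rewrite ltnn.
Qed.

End ScheduleOfRank.

Definition rank_of n (D : seq {set 'I_n}) (k : 'I_n) : nat :=
  find (fun B : {set 'I_n} => k \in B) D.

Lemma rank_ofP n (D : seq {set 'I_n}) : update_schedule D ->
  (forall k, rank_of D k < size D) /\
  (forall k t, t < size D -> (k \in nth set0 D t) = (rank_of D k == t)).
Proof.
case/andP=> D_uniq /and3P[/eqP D_cover D_triv _].
have D_has k : has (fun B : {set 'I_n} => k \in B) D.
  have /bigcupP[B] : k \in cover [set:: D] by rewrite D_cover inE.
  by rewrite inE => BD kB; apply/hasP; exists B.
have rank_lt k : rank_of D k < size D by rewrite /rank_of -has_find.
split=> // k t tD; have k_in := nth_find set0 (D_has k).
have [<- //|neq_t] := eqVneq (rank_of D k) t; apply/negbTE/negP => k_t.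
have neq_blocks : nth set0 D t != nth set0 D (rank_of D k).
  by rewrite nth_uniq // eq_sym.
have /trivIsetP/(_ _ _ _ _ neq_blocks) := D_triv.
rewrite !inE !mem_nth // => /(_ isT isT) disj.
by rewrite (disjointFr disj k_t) in k_in.
Qed.

Lemma update_eqn_sched_rank n (D : seq {set 'I_n}) x : update_schedule D ->
  update_eqn (label_of (rank_of D)) x (sched_update D x).
Proof. by case/rank_ofP => rank_lt rank_mem; apply: update_eqn_sched. Qed.

Lemma sched_update_drop_empty n (D : seq {set 'I_n}) x :
  sched_update [seq B <- D | B != set0] x = sched_update D x.
Proof.
rewrite /sched_update; elim: D x => //= B D IHD x.
case: eqP => [->|_] //=; rewrite IHD; congr foldl.
by apply/ffunP => i; rewrite ffunE inE.
Qed.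

Definition level_sets n (rho : 'I_n -> nat) (N : nat) : seq {set 'I_n} :=
  [seq B <- [seq [set k | rho k == t] | t <- iota 0 N] | B != set0].

Lemma update_schedule_level_sets n (rho : 'I_n -> nat) N :
  (forall k, rho k < N) -> update_schedule (level_sets rho N).
Proof.
move=> rho_lt; apply/andP; split.
  rewrite /level_sets filter_map map_inj_in_uniq ?filter_uniq ?iota_uniq //.
  move=> t1 t2; rewrite mem_filter /= => /andP[/set0Pn[k k_t1] _] _ /setP/(_ k).
  by move: k_t1; rewrite !inE => /eqP->; rewrite eqxx => /esym/eqP.
apply/and3P; split.
- apply/eqP/setP => k; rewrite inE; apply/bigcupP; exists [set j | rho j == rho k].
    rewrite inE mem_filter; apply/andP; split; first by apply/set0Pn; exists k; rewrite inE.
    by apply/mapP; exists (rho k); rewrite // mem_iota add0n rho_lt.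
  by rewrite inE.
- apply/trivIsetP => A B; rewrite !inE !mem_filter.
  move=> /andP[_ /mapP[t1 _ ->]] /andP[_ /mapP[t2 _ ->]] neq_AB.
  rewrite -setI_eq0; apply: contraR neq_AB => /set0Pn[k].
  by rewrite !inE => /andP[/eqP<- /eqP<-].
- by rewrite inE mem_filter eqxx.
Qed.

Lemma sched_of_rank n (rho : 'I_n -> nat) :
  exists2 D, update_schedule D & forall x, update_eqn (label_of rho) x (sched_update D x).
Proof.
pose N := (\max_k rho k).+1.
have rho_lt k : rho k < N by rewrite ltnS; apply: leq_bigmax.
exists (level_sets rho N); first exact: update_schedule_level_sets.
move=> x; rewrite sched_update_drop_empty.
apply: update_eqn_sched => [k|k t]; first by rewrite size_map size_iota.
rewrite size_map size_iota => tN.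
by rewrite (nth_map 0) ?size_iota // nth_iota // inE add0n.
Qed.

(** * Admissible labellings *)

Definition monotone_cycle n (L : labelling n) (a b : 'I_3) : bool :=
  [forall k, L k != a] && [exists k, L k == b].

Definition admissible n (L : labelling n) : bool :=
  ~~ monotone_cycle L lab_gt lab_lt && ~~ monotone_cycle L lab_lt lab_gt.

Lemma admissible_label_of n (rho : 'I_n -> nat) : admissible (label_of rho).
Proof.
apply/andP; split; apply/negP => /andP[/forallP no_a /existsP[k]].
- rewrite label_of_lt => lt_k.
  have le_step j : rho j <= rho (ordS j).
    by have := no_a j; rewrite label_of_gt -leqNgt.
  by have := cycle_rel_sym leqnn leq_trans le_step k; rewrite leqNgt lt_k.
- rewrite label_of_gt => gt_k.
  have ge_step j : rho (ordS j) <= rho j.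
    by have := no_a j; rewrite label_of_lt -leqNgt.
  have geq_trans : transitive geq by move=> ? ? ? h1 h2; apply: leq_trans h2 h1.
  by have := cycle_rel_sym (R := geq) leqnn geq_trans ge_step k; rewrite /= leqNgt gt_k.
Qed.

Lemma monotone_cycleN n (L : labelling n) a b k :
  ~~ monotone_cycle L a b -> L k = b -> exists j, L j = a.
Proof.
rewrite negb_and negb_forall => /orP[/existsP[j]|/existsPn/(_ k) + L_k].
  by rewrite negbK => /eqP; exists j.
by rewrite L_k eqxx.
Qed.

Lemma admissible_lt_gt n (L : labelling n) k : admissible L -> L k != lab_eq ->
  (exists g, L g = lab_gt) /\ (exists l, L l = lab_lt).
Proof.
case/andP=> not_up not_down; case: (labelP (L k)) => L_k; rewrite L_k // => _.
  by split; [apply: monotone_cycleN not_up L_k | exists k].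
by split; [exists k | apply: monotone_cycleN not_down L_k].
Qed.

(* Walking around the cycle from [ordS g], where [L g = lab_gt], a step
   labelled [lab_lt] raises the potential by [n], [lab_eq] keeps it and
   [lab_gt] lowers it by one (fewer than [n] such steps occur, so the offset
   [n] prevents truncation); the closing step back to the start is then a
   descent because some step was a [lab_lt]. *)
Section RankOfLabelling.

Variables (n : nat) (L : labelling n) (g : 'I_n).
Hypothesis L_g : L g = lab_gt.
Hypothesis has_lt : exists l, L l = lab_lt.

Let b := ordS g.

Let count_lab c t := \sum_(s < t) (L (ord_shift b s) == c).

Let potential t := n * count_lab lab_lt t + n - count_lab lab_gt t.

Let n_gt0 : 0 < n := ord_gt0 g.

Lemma count_lab_le c t : count_lab c t <= t.
Proof.
rewrite -[leqRHS]card_ord -sum1_card; apply: leq_sum => i _.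
by case: (_ == c).
Qed.

Lemma count_labS c t : count_lab c t.+1 = count_lab c t + (L (ord_shift b t) == c).
Proof. by rewrite /count_lab big_ord_recr. Qed.

Lemma potential_step t : t < n ->
  compare_lab (potential t) (potential t.+1) = L (ord_shift b t).
Proof.
move=> tn; rewrite /potential !count_labS.
have := count_lab_le lab_gt t; move: (count_lab lab_gt t) => c c_le.
case: (labelP (L (ord_shift b t))) => ->; rewrite /= ?addn0 ?addn1 ?mulnS /compare_lab;
  move: (n * _) => A.
all: by case: ltngtP => // ?; exfalso; lia.
Qed.

Lemma ord_shift_last : ord_shift b n.-1 = g.
Proof. by rewrite /b ordS_shift1 ord_shiftD add1n prednK ?ord_shiftn. Qed.

Lemma potential_wrap : compare_lab (potential n.-1) (potential 0) = lab_gt.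
Proof.
have [l L_l] := has_lt.
have [t tn l_t] := ord_shiftP b l.
have t_lt : t < n.-1.
  rewrite ltn_neqAle -ltnS prednK // tn andbT; apply/eqP => t_last.
  by move: L_l; rewrite l_t t_last ord_shift_last L_g.
have lt_ge1 : 0 < count_lab lab_lt n.-1.
  by rewrite /count_lab (bigD1 (Ordinal t_lt)) //= -l_t L_l eqxx.
have gt_le := count_lab_le lab_gt n.-1.
have count0 c : count_lab c 0 = 0 by rewrite /count_lab big_ord0.
rewrite /potential !count0 /compare_lab.
move: (count_lab lab_lt n.-1) (count_lab lab_gt n.-1) lt_ge1 gt_le => a c a_ge1 c_le.
have : n <= n * a by rewrite -{1}(muln1 n) leq_mul2l a_ge1 orbT.
by move: (n * a) => A A_ge; case: ltngtP => // ?; exfalso; lia.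
Qed.

Lemma exists_rank_of_labelling : exists rho, label_of rho = L.
Proof.
exists (fun k => potential (ord_offset b k)); apply/ffunP => k.
have [t tn ->] := ord_shiftP b k.
rewrite ffunE ordS_shift ord_shiftK //.
have [t_lt|t_ge] := ltnP t.+1 n; first by rewrite ord_shiftK // potential_step.
have -> : t = n.-1 by lia.
have := ord_shiftK b n_gt0; rewrite ord_shift0 => offset_b.
by rewrite prednK // ord_shiftn offset_b potential_wrap ord_shift_last L_g.
Qed.

End RankOfLabelling.

Lemma admissibleP n (L : labelling n) :
  reflect (exists rho, label_of rho = L) (admissible L).
Proof.
apply: (iffP idP) => [adm|[rho <-]]; last exact: admissible_label_of.
case: (pickP (fun k => L k != lab_eq)) => [k Lk|all_eq].
  have [[g L_g] has_lt] := admissible_lt_gt adm Lk.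
  exact: exists_rank_of_labelling L_g has_lt.
exists (fun _ => 0); apply/ffunP => k; rewrite ffunE /compare_lab ltnn eqxx.
by move: (all_eq k) => /negbFE/eqP.
Qed.

Definition update_map n (L : labelling n) : {ffun config n -> config n} :=
  [ffun x => odflt x [pick y | update_eqn L x y]].

Lemma update_map_label_of n (rho : 'I_n -> nat) x y :
  update_eqn (label_of rho) x y -> update_map (label_of rho) x = y.
Proof.
move=> y_eq; rewrite ffunE; case: pickP => [y' y'_eq|no_sol] /=.
  exact: update_eqn_label_of_uniq y'_eq y_eq.
by have := no_sol y; rewrite y_eq.
Qed.

Lemma update_mapP n (L : labelling n) x :
  admissible L -> update_eqn L x (update_map L x).
Proof.
case/admissibleP => rho <-; have [D _ D_eq] := sched_of_rank rho.
by rewrite (update_map_label_of (D_eq x)).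
Qed.

Lemma update_map_uniq n (L : labelling n) x y :
  admissible L -> update_eqn L x y -> update_map L x = y.
Proof. by case/admissibleP => rho <-; apply: update_map_label_of. Qed.

Definition fun_graph n (h : {ffun config n -> config n}) : {set config n * config n} :=
  [set (x, h x) | x : config n].

Lemma fun_graph_inj n : injective (@fun_graph n).
Proof.
move=> h h' eq_graph; apply/ffunP => x.
have : (x, h x) \in fun_graph h by apply/imsetP; exists x.
by rewrite eq_graph => /imsetP[x' _ [-> ->]].
Qed.

Definition admissible_labellings n : {set labelling n} := [set L | admissible L].

Lemma dynamics_setE n :
  dynamics_set n = [set fun_graph (update_map L) | L in admissible_labellings n].
Proof.
apply/setP => G; rewrite inE; apply/asboolP/imsetP => [[D [D_sched <-]]|[L]].
  exists (label_of (rank_of D)); first by rewrite inE admissible_label_of.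
  apply: eq_imset => x.
  by rewrite (update_map_label_of (update_eqn_sched_rank x D_sched)).
rewrite inE => /admissibleP[rho <-] ->; have [D D_sched D_eq] := sched_of_rank rho.
exists D; split => //; apply: eq_imset => x.
by rewrite (update_map_label_of (D_eq x)).
Qed.

Lemma card_dynamics_set n :
  #|dynamics_set n| = #|[set update_map L | L in admissible_labellings n]|.
Proof.
rewrite dynamics_setE (imset_comp (@fun_graph n) (@update_map n)).
exact: card_imset (@fun_graph_inj n).
Qed.

(** * Distinguishing update maps *)

Lemma update_eqn_gt_impl n (L : labelling n) x y k :
  update_eqn L x y -> L k == lab_gt -> y k ==> y (ordS k).
Proof.
by move=> /update_eqnP y_eq L_k; rewrite y_eq L_k /r162; apply/implyP => /andP[].
Qed.

Lemma update_eqn_gt_chain n (L : labelling n) x y k t :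
  update_eqn L x y -> (forall s, s < t -> L (ord_shift k s) == lab_gt) ->
  y k ==> y (ord_shift k t).
Proof.
move=> y_eq; elim: t => [|t IHt] L_gt; first by rewrite ord_shift0 implybb.
have y_t := IHt (fun s st => L_gt s (ltnW st)).
have y_step := update_eqn_gt_impl y_eq (L_gt t (ltnSn t)).
by rewrite -ordS_shift; apply/implyP => /(implyP y_t)/(implyP y_step).
Qed.

Definition point_config n (c : 'I_n) : config n := [ffun j => j == c].

Definition copoint_config n (c : 'I_n) : config n := [ffun j => j != c].

Lemma point_configE n (c j : 'I_n) : point_config c j = (j == c).
Proof. by rewrite ffunE. Qed.

Lemma copoint_configE n (c j : 'I_n) : copoint_config c j = (j != c).
Proof. by rewrite ffunE. Qed.

Lemma update_map_point_config n (L : labelling n) k : 1 < n -> admissible L ->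
  update_map L (point_config (ordS k)) k = (L k != lab_gt).
Proof.
move=> n_gt1 adm; have y_eq := update_eqnP (update_mapP (point_config (ordS k)) adm).
have k_neq : (k == ordS k) = false by rewrite eq_sym ordS_eqF.
rewrite y_eq !point_configE k_neq eqxx /r162 /= orbT /=.
by case: ifP => // /eqP L_k; rewrite y_eq ordSK L_k /= !point_configE k_neq /= eqxx.
Qed.

Definition gt_run n (L : labelling n) (i : 'I_n) : bool :=
  [forall t : 'I_n, (0 < t <= n - 2) ==> (L (ord_shift i t) == lab_gt)].

Lemma gt_runP n (L : labelling n) i : gt_run L i ->
  forall t, 0 < t <= n - 2 -> L (ord_shift i t) == lab_gt.
Proof.
move=> /forallP run t t_range; have t_lt : t < n by case/andP: t_range => t_gt0 t_le; lia.
by have /implyP := run (Ordinal t_lt); apply.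
Qed.

Lemma first_break_of_gt_run n (L : labelling n) i : ~~ gt_run L i ->
  exists t, [/\ 0 < t <= n - 2, L (ord_shift i t) != lab_gt &
                forall s, 0 < s < t -> L (ord_shift i s) == lab_gt].
Proof.
move=> /forallPn[t0]; rewrite negb_imply => /andP[t0_range L_t0].
have: exists t, (0 < t <= n - 2) && (L (ord_shift i t) != lab_gt).
  by exists t0; rewrite t0_range.
case/ex_minnP => t /andP[t_range L_t] t_min; exists t; split=> // s /andP[s_gt0 s_lt].
apply: contraT => L_s; have s_range : 0 < s <= n - 2 by case/andP: t_range; lia.
by have := t_min s; rewrite s_range L_s => /(_ isT); lia.
Qed.

Section CopointProbe.

Variables (n : nat) (L : labelling n) (i : 'I_n).
Hypotheses (n_gt2 : 2 < n) (adm : admissible L).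

Let y := update_map L (copoint_config i).
Let y_eq := update_eqnP (update_mapP (copoint_config i) adm).

Lemma copoint_config_shift s : 0 < s < n -> copoint_config i (ord_shift i s) = true.
Proof. by move=> s_range; rewrite copoint_configE ord_shift_neq. Qed.

Lemma copoint_run_step s : 1 < s < n -> L (ord_shift i s.-1) == lab_gt ->
  y (ord_shift i s) =
  if L (ord_shift i s) == lab_gt then y (ord_shift i s.+1)
  else copoint_config i (ord_shift i s.+1).
Proof.
case: s => // s s_range L_gt; rewrite y_eq ordS_shift ord_pred_shift (eqP L_gt).
by rewrite (copoint_config_shift (s := s)) ?(copoint_config_shift (s := s.+1)) //; lia.
Qed.

Lemma copoint_run_ones t : t <= n - 2 -> L (ord_shift i t) != lab_gt ->
  (forall s, 0 < s < t -> L (ord_shift i s) == lab_gt) ->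
  forall s, 1 < s <= t -> y (ord_shift i s).
Proof.
move=> tn L_t L_before s /andP[s_gt1 s_le].
suff run d : 1 < t - d -> y (ord_shift i (t - d)).
  by move: (run (t - s)); rewrite subKn //; apply.
elim: d => [|d IHd] d_gt1.
  have t_range : 1 < t < n by lia.
  have L_pred : L (ord_shift i t.-1) == lab_gt by apply: L_before; lia.
  rewrite subn0 (copoint_run_step t_range L_pred) (negbTE L_t).
  by rewrite copoint_config_shift //; lia.
have d_range : 1 < t - d.+1 < n by lia.
have L_pred : L (ord_shift i (t - d.+1).-1) == lab_gt by apply: L_before; lia.
have L_s : L (ord_shift i (t - d.+1)) == lab_gt by apply: L_before; lia.
rewrite (copoint_run_step d_range L_pred) L_s.
have -> : (t - d.+1).+1 = t - d by lia.
by apply: IHd; lia.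
Qed.

Lemma update_map_copoint_config : L i != lab_gt -> ~~ gt_run L i ->
  y (ord_shift i 1) = (L i == lab_lt).
Proof.
move=> L_i /first_break_of_gt_run[t [/andP[t_gt0 t_le] L_t L_before]].
have y_i : y i.
  rewrite y_eq (negbTE L_i) !copoint_configE eqxx ordS_shift1 ord_shift_neq.
    by rewrite /r162 orbT.
  lia.
rewrite y_eq ord_pred_shift ord_shift0 y_i ordS_shift copoint_config_shift; last by lia.
rewrite copoint_configE eqxx /r162 /= orbF.
have -> : (if L (ord_shift i 1) == lab_gt then y (ord_shift i 2)
           else copoint_config i (ord_shift i 2)) = true.
  case: ifP => [L_1|_]; last by rewrite copoint_config_shift //; lia.
  have t_ge2 : 1 < t.
    apply: contraTT L_1; rewrite -leqNgt => t_le1.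
    have t1 : t = 1 by lia.
    by move: L_t; rewrite t1.
  by apply: copoint_run_ones t_le L_t L_before _ _; lia.
by case: (L i == lab_lt).
Qed.

End CopointProbe.

Lemma admissible_of_lt_gt n (L : labelling n) j k :
  L j = lab_lt -> L k = lab_gt -> admissible L.
Proof.
move=> L_j L_k; apply/andP; split; apply/negP => /andP[/forallP no_lab _].
- by have := no_lab k; rewrite L_k.
- by have := no_lab j; rewrite L_j.
Qed.

Definition label_lt_eq n (j : 'I_n) : labelling n :=
  [ffun k => if k == j then lab_lt else if k == ordS j then lab_eq else lab_gt].

Definition label_lt_lt n (j : 'I_n) : labelling n :=
  [ffun k => if k == j then lab_lt else if k == ordS j then lab_lt else lab_gt].

Definition collapsed_labellings n : {set labelling n} := [set label_lt_eq j | j : 'I_n].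

Section Collision.

Variables (n : nat) (j : 'I_n).
Hypothesis n_gt2 : 2 < n.

Lemma ord_shift_far s : 1 < s < n ->
  (ord_shift j s == j) = false /\ (ord_shift j s == ordS j) = false.
Proof.
move=> s_range; split; apply/negbTE.
  by apply: ord_shift_neq; lia.
by rewrite ordS_shift1 eq_ord_shift //; lia.
Qed.

Lemma label_lt_lt_far s : 1 < s < n -> label_lt_lt j (ord_shift j s) = lab_gt.
Proof. by move=> /ord_shift_far[j_neq Sj_neq]; rewrite ffunE j_neq Sj_neq. Qed.

Lemma label_lt_eq_far s : 1 < s < n -> label_lt_eq j (ord_shift j s) = lab_gt.
Proof. by move=> /ord_shift_far[j_neq Sj_neq]; rewrite ffunE j_neq Sj_neq. Qed.

Lemma label_lt_lt_Sj : label_lt_lt j (ordS j) = lab_lt.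
Proof. by rewrite ffunE eqxx; case: ifP. Qed.

Lemma label_lt_eq_Sj : label_lt_eq j (ordS j) = lab_eq.
Proof. by rewrite ffunE eqxx ordS_eqF // ltnW. Qed.

Lemma admissible_label_lt_lt : admissible (label_lt_lt j).
Proof.
apply: (admissible_of_lt_gt (j := j) (k := ord_shift j 2)); last exact: label_lt_lt_far.
by rewrite ffunE eqxx.
Qed.

Lemma admissible_label_lt_eq : admissible (label_lt_eq j).
Proof.
apply: (admissible_of_lt_gt (j := j) (k := ord_shift j 2)); last exact: label_lt_eq_far.
by rewrite ffunE eqxx.
Qed.

(* Under [label_lt_lt j] the value at [j + 3] propagates back to [j] through
   the cells labelled [lab_gt], so when it is [true] the cell [j + 2] reads a
   [true] left neighbour whether it is the old or the new value of [j + 1]. *)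
Lemma update_map_label_lt_eq : update_map (label_lt_eq j) = update_map (label_lt_lt j).
Proof.
apply/ffunP => x; set y := update_map (label_lt_lt j) x.
have y_eq := update_eqnP (update_mapP x admissible_label_lt_lt).
apply: update_map_uniq; first exact: admissible_label_lt_eq.
have same_gt k : (label_lt_eq j k == lab_gt) = (label_lt_lt j k == lab_gt).
  by rewrite !ffunE; case: (k == j); case: (k == ordS j).
apply/forallP => k /=; apply/eqP; rewrite same_gt.
have [pk_eq|pk_neq] := eqVneq (ord_pred k) (ordS j); last first.
  have same_lt : (label_lt_eq j (ord_pred k) == lab_lt) =
                 (label_lt_lt j (ord_pred k) == lab_lt).
    by rewrite !ffunE (negbTE pk_neq).
  by rewrite same_lt [LHS]y_eq.
have k_eq : k = ord_shift j 2.
  by rewrite -(ord_predK k) pk_eq [ordS j]ordS_shift1 ordS_shift.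
have y_back : y (ord_shift j 3) ==> y j.
  have := update_eqn_gt_chain (k := ord_shift j 3) (t := n - 3)
    (update_mapP x admissible_label_lt_lt).
  rewrite ord_shiftD subnKC ?ord_shiftn //; apply=> s s_lt.
  by rewrite ord_shiftD label_lt_lt_far //; lia.
have y_j : y j ==> x (ordS j).
  by rewrite y_eq [label_lt_lt j j]ffunE eqxx /r162; apply/implyP => /andP[].
have y_Sj : y (ordS j) = r162 (y j) (x (ordS j)) (x (ord_shift j 2)).
  rewrite y_eq ordSK [label_lt_lt j j]ffunE eqxx label_lt_lt_Sj /=.
  by rewrite ordS_shift1 ordS_shift.
rewrite y_eq pk_eq label_lt_eq_Sj k_eq ordS_shift label_lt_lt_far //= y_Sj.
rewrite label_lt_lt_Sj -/y /=; move: y_back y_j; rewrite /r162.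
by case: (y (ord_shift j 3)); case: (y j); case: (x (ordS j)); case: (x (ord_shift j 2)).
Qed.

End Collision.

Lemma label_lt_lt_not_collapsed n (j : 'I_n) : 2 < n ->
  label_lt_lt j \notin collapsed_labellings n.
Proof.
move=> n_gt2; apply/imsetP => -[j' _ /ffunP/(_ (ordS j'))].
by rewrite label_lt_eq_Sj // ffunE; case: ifP => //; case: ifP.
Qed.

Lemma collapsed_sub_admissible n : 2 < n ->
  collapsed_labellings n \subset admissible_labellings n.
Proof.
by move=> n_gt2; apply/subsetP => _ /imsetP[j _ ->]; rewrite inE admissible_label_lt_eq.
Qed.

Lemma card_collapsed n : #|collapsed_labellings n| = n.
Proof.
rewrite card_imset ?card_ord // => j j' /ffunP/(_ j).
by rewrite !ffunE eqxx; case: eqP => // _; case: ifP.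
Qed.

Lemma lab_lt_of_gt_run n (M : labelling n) i : 2 < n -> admissible M ->
  M \notin collapsed_labellings n -> M i != lab_gt -> gt_run M i -> M i = lab_lt.
Proof.
move=> n_gt2 adm not_collapsed M_i /gt_runP run.
have M_far k : k != i -> k != ord_pred i -> M k = lab_gt.
  move=> k_i k_pi; case: (ord_around_cases i k (ltnW n_gt2)) => [k_eq|k_eq|[t t_range ->]].
  - by rewrite k_eq eqxx in k_i.
  - by rewrite k_eq eqxx in k_pi.
  - exact/eqP/run.
case: (label_neq_gt M_i) => // M_i_eq; exfalso.
have [pi_lt|pi_nlt] := eqVneq (M (ord_pred i)) lab_lt.
  case/imsetP: not_collapsed; exists (ord_pred i) => //; apply/ffunP => k.
  rewrite ffunE ord_predK; case: eqVneq => [->|k_pi] //.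
  by case: eqVneq => [->|k_i] //; rewrite M_far.
move: adm => /andP[_ /negP]; apply; apply/andP; split.
  apply/forallP => k; have [->|k_i] := eqVneq k i; first by rewrite M_i_eq.
  by have [->|k_pi] := eqVneq k (ord_pred i); last by rewrite M_far.
by apply/existsP; exists (ord_shift i 1); apply: run; lia.
Qed.

Lemma update_map_inj n : 2 < n ->
  {in admissible_labellings n :\: collapsed_labellings n &, injective (@update_map n)}.
Proof.
move=> n_gt2 L L'; rewrite !inE => /andP[nc adm] /andP[nc' adm'] eq_maps.
have n_gt1 : 1 < n by lia.
have same_gt k : (L k == lab_gt) = (L' k == lab_gt).
  apply: negb_inj; rewrite -(update_map_point_config _ n_gt1 adm).
  by rewrite -(update_map_point_config _ n_gt1 adm') eq_maps.
apply/ffunP => i; have [L_gt|L_ngt] := eqVneq (L i) lab_gt.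
  by rewrite L_gt; apply/esym/eqP; rewrite -same_gt L_gt.
have L'_ngt : L' i != lab_gt by rewrite -same_gt.
have same_run : gt_run L i = gt_run L' i by apply: eq_forallb => t; rewrite same_gt.
have same_lt : (L i == lab_lt) = (L' i == lab_lt).
  have [run|no_run] := boolP (gt_run L i).
    have run' : gt_run L' i by rewrite -same_run.
    rewrite (lab_lt_of_gt_run n_gt2 adm nc L_ngt run).
    by rewrite (lab_lt_of_gt_run n_gt2 adm' nc' L'_ngt run').
  have no_run' : ~~ gt_run L' i by rewrite -same_run.
  rewrite -(update_map_copoint_config n_gt2 adm L_ngt no_run).
  by rewrite -(update_map_copoint_config n_gt2 adm' L'_ngt no_run') eq_maps.
by move: same_lt; case: (label_neq_gt L_ngt) => ->; case: (label_neq_gt L'_ngt) => ->.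
Qed.

Lemma card_update_maps n : 2 < n ->
  #|[set update_map L | L in admissible_labellings n]| =
  #|admissible_labellings n| - n.
Proof.
move=> n_gt2.
have -> : [set update_map L | L in admissible_labellings n] =
          [set update_map L | L in admissible_labellings n :\: collapsed_labellings n].
  apply/eqP; rewrite eqEsubset; apply/andP; split; last exact/imsetS/subsetDl.
  apply/subsetP => _ /imsetP[L L_adm ->].
  have [/imsetP[j _ ->]|L_nc] := boolP (L \in collapsed_labellings n).
    rewrite update_map_label_lt_eq //; apply: imset_f.
    by rewrite !inE label_lt_lt_not_collapsed // admissible_label_lt_lt.
  by apply: imset_f; rewrite inE L_nc.
rewrite card_in_imset; last exact: update_map_inj.
by rewrite cardsD (setIidPr (collapsed_sub_admissible n_gt2)) card_collapsed.
Qed.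

(** * Counting *)

Lemma card_labellings_avoiding n (a : 'I_3) :
  #|[set L : labelling n | [forall k, L k != a]]| = 2 ^ n.
Proof.
rewrite (_ : 2 ^ n = #|predC1 a| ^ #|'I_n|); last by rewrite cardC1 !card_ord.
rewrite -card_ffun_on; apply: eq_card => L; rewrite inE.
by apply/forallP/ffun_onP => L_a k; have := L_a k.
Qed.

Lemma card_monotone_cycle n (a b : 'I_3) :
  a != lab_eq -> b != lab_eq -> a != b ->
  #|[set L : labelling n | monotone_cycle L a b]| = 2 ^ n - 1.
Proof.
move=> a_eq b_eq ab.
have other c : c != a -> c != lab_eq -> c = b.
  by move: a_eq b_eq ab; case: (labelP a) (labelP b) (labelP c) => -> [] -> [] ->.
pose const_eq : labelling n := [ffun=> lab_eq].
have -> : [set L : labelling n | monotone_cycle L a b] =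
          [set L : labelling n | [forall k, L k != a]] :\ const_eq.
  apply/setP => L; rewrite !inE /monotone_cycle andbC.
  have [no_a|] /= := boolP [forall k, L k != a]; last by rewrite !andbF.
  rewrite !andbT; apply/existsP/idP => [[k /eqP L_k]|L_neq].
    by apply: contra_neq b_eq => L_eq; rewrite -L_k L_eq ffunE.
  have [k L_k] : exists k, L k != lab_eq.
    apply/existsP; apply: contraR L_neq => /existsPn all_eq.
    by apply/eqP/ffunP => k; rewrite ffunE; apply/eqP/negPn/all_eq.
  by exists k; rewrite (other _ (forallP no_a k) L_k).
have const_eq_in : const_eq \in [set L : labelling n | [forall k, L k != a]].
  by rewrite inE; apply/forallP => k; rewrite ffunE eq_sym.
have := cardsD1 const_eq [set L : labelling n | [forall k, L k != a]].
by rewrite const_eq_in card_labellings_avoiding => ->; lia.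
Qed.

Lemma card_admissible n : #|admissible_labellings n| + 2 ^ n.+1 = 3 ^ n + 2.
Proof.
pose up := [set L : labelling n | monotone_cycle L lab_gt lab_lt].
pose down := [set L : labelling n | monotone_cycle L lab_lt lab_gt].
have adm_eq : admissible_labellings n = ~: (up :|: down).
  by apply/setP => L; rewrite !inE negb_or.
have up_down : up :&: down = set0.
  apply/setP => L; rewrite !inE /monotone_cycle.
  by apply/negP => /andP[/andP[_ /existsP[k L_k]] /andP[/forallP/(_ k)]]; rewrite L_k.
have := cardsC (up :|: down); rewrite -adm_eq.
rewrite card_ffun !card_ord cardsU up_down cards0 subn0 !card_monotone_cycle // expnS.
have : 0 < 2 ^ n by rewrite expn_gt0.
by move: #|admissible_labellings n| (2 ^ n) (3 ^ n) => c p q; lia.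
Qed.

Theorem mainTheorem8 (n : nat) : 3 <= n ->
  mu162 n = (((3 ^ n)%:R - (2 ^ n.+1)%:R - n%:R + 2) /
             ((3 ^ n)%:R - (2 ^ n.+1)%:R + 2))%R.
Proof.
move=> n_ge3.
have n_le : n <= #|admissible_labellings n|.
  by rewrite -[leqLHS]card_collapsed subset_leq_card // collapsed_sub_admissible.
rewrite /mu162 card_dynamics_set card_update_maps // natrB //.
have : (#|admissible_labellings n|%:R + (2 ^ n.+1)%:R = (3 ^ n)%:R + 2 :> rat)%R.
  by rewrite -!natrD card_admissible.
by move=> card_eq; congr (_ / _)%R; lra.
Qed.
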